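(* Let $H$ be a complex Hilbert space and $\{\mathcal{U}(t)\}_{t\geq 0}$ a strongly continuous semigroup on $H$ with generator $\mathcal{L}$. Let $z\in D(\mathcal{L})$ with $z\neq 0$, let $\mathcal{P}:=(\cdot,z)(z,z)^{-1}z$ and $\mathcal{Q}:=1-\mathcal{P}$. Let $\{e^{\mathcal{LQ}t}\}_{t\geq 0}$ denote the strongly continuous semigroup generated by the operator $\mathcal{LQ}$ (with domain $D(\mathcal{LQ})=\{x\in H:\mathcal{Q}x\in D(\mathcal{L})\}$). Then $\{\mathcal{G}(t):=\mathcal{P}+\mathcal{Q}e^{\mathcal{LQ}t}\}_{t\geq 0}$ is a strongly continuous semigroup on $H$.
   Context: The scalar product $(\cdot,\cdot)$ on $H$ is conjugate-linear in its second argument. The generator is defined by $\mathcal{L}x:=\lim_{h\searrow 0}\frac1h[\mathcal{U}(h)x-x]$ on the domain $D(\mathcal{L})$ of all $x$ for which this limit exists in $H$. The notation $\{e^{\mathcal{A}t}\}_{t\ge0}$ means the strongly continuous semigroup generated by $\mathcal{A}$ (not an exponential series). *)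

From HB Require Import structures.
From mathcomp Require Import all_boot all_order all_algebra.
From mathcomp Require Import all_classical all_reals all_analysis.
From mathcomp.real_closed Require Import complex.
Set Implicit Arguments. Unset Strict Implicit. Unset Printing Implicit Defensive.
Import Order.TTheory GRing.Theory Num.Theory.
Import numFieldNormedType.Exports.
Local Open Scope ring_scope.
Local Open Scope classical_set_scope.

Notation Cplx R := (complex R).

(* ip is an inner product on H (conjugate-linear in its second argument)
   inducing the norm of H; with H complete this makes H a complex Hilbert space. *)
Definition is_inner_product (R : realType) (H : normedModType (Cplx R))
    (ip : H -> H -> Cplx R) : Prop :=
  [/\ forall (a : Cplx R) (x y w : H), ip (a *: x + y) w = a * ip x w + ip y w,
      forall x y : H, ip x y = Num.conj (ip y x),
      forall x : H, 0 <= ip x x,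
      forall x : H, ip x x = 0 -> x = 0
    & forall x : H, `|x| ^+ 2 = ip x x].

(* Strongly continuous semigroup {U t}_{t >= 0} of bounded linear operators on H
   (values of U at negative times are irrelevant). *)
Definition C0_semigroup (R : realType) (H : normedModType (Cplx R))
    (U : R -> H -> H) : Prop :=
  [/\ forall t, 0 <= t -> forall (a : Cplx R) (x y : H), U t (a *: x + y) = a *: U t x + U t y,
      forall t, 0 <= t -> continuous (U t),
      forall x, U 0 x = x,
      forall s t, 0 <= s -> 0 <= t -> forall x, U (s + t) x = U s (U t x)
    & forall x, (fun t => U t x) @ at_right (0 : R) --> x].

Definition diff_quot (R : realType) (H : normedModType (Cplx R))
    (U : R -> H -> H) (x : H) : R -> H :=
  fun h => ((h%:C)%C)^-1 *: (U h x - x).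

(* is_generator U x y  <->  x \in D(L) and L x = y, where L is the generator of U:
   L x := lim_{h \searrow 0} (U h x - x)/h. *)
Definition is_generator (R : realType) (H : normedModType (Cplx R))
    (U : R -> H -> H) (x y : H) : Prop :=
  diff_quot U x @ at_right (0 : R) --> y.

Definition projP (R : realType) (H : normedModType (Cplx R))
    (ip : H -> H -> Cplx R) (z : H) : H -> H :=
  fun x => (ip x z / ip z z) *: z.

Definition projQ (R : realType) (H : normedModType (Cplx R))
    (ip : H -> H -> Cplx R) (z : H) : H -> H :=
  fun x => x - projP ip z x.

From HB Require Import structures.
From mathcomp Require Import all_boot all_order all_algebra.
From mathcomp Require Import all_classical all_reals all_analysis.
From mathcomp.real_closed Require Import complex.
From mathcomp Require Import ring.
Import Order.TTheory GRing.Theory Num.Theory.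
Import numFieldNormedType.Exports.
Local Open Scope ring_scope.
Local Open Scope classical_set_scope.

(* Since Q z = 0, the generator LQ of V vanishes at z, and this forces V t z = z
   for all t: by Banach-Steinhaus a C0-semigroup is uniformly bounded, say by M,
   on some [0, d), and telescoping gives |V (n s) z - z| <= n M |V s z - z|, which
   is at most t M e when s = t/n is so small that |V s z - z| <= s e.  Hence V t
   fixes the range of the rank-one projection P, and then P + Q V t is again a
   C0-semigroup: P (P + Q V t) = P and Q V s (P + Q V t) = Q V (s + t). *)

(* The real normed space underlying H: Banach-Steinhaus is only available over
   real scalars. *)
Section Realification.
Context {R : realType} (H : completeNormedModType (Cplx R)).

Lemma ge0_complexE {a : Cplx R} : 0 <= a -> a = ((complex.Re a)%:C)%C.
Proof. by move=> /ger0_real/RRe_real. Qed.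

Lemma norm_real_complex (r : R) : `|(r%:C)%C : Cplx R| = ((`|r|)%:C)%C.
Proof. by rewrite normc_def /= expr0n /= addr0 sqrtr_sqr. Qed.

Definition realification : Type := H.
Local Notation HR := realification.

HB.instance Definition _ := Complete.copy HR H.
HB.instance Definition _ := GRing.Zmodule.copy HR H.

Definition scale_real (r : R) (x : HR) : HR := ((r%:C)%C : Cplx R) *: (x : H).

Lemma scale_realA a b v : scale_real a (scale_real b v) = scale_real (a * b) v.
Proof. by rewrite /scale_real scalerA rmorphM. Qed.
Lemma scale_real1 : left_id 1 scale_real.
Proof. by move=> v; rewrite /scale_real rmorph1 scale1r. Qed.
Lemma scale_realDr : right_distributive scale_real +%R.
Proof. by move=> a u v; rewrite /scale_real scalerDr. Qed.
Lemma scale_realDl v : {morph scale_real^~ v : a b / a + b}.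
Proof. by move=> a b; rewrite /scale_real rmorphD scalerDl. Qed.

HB.instance Definition _ := GRing.Zmodule_isLmodule.Build R HR
  scale_realA scale_real1 scale_realDr scale_realDl.

Definition ball_real (x : HR) (e : R) (y : HR) : Prop := @ball _ H x ((e%:C)%C) y.

Lemma ball_real_center x (e : R) : 0 < e -> ball_real x e x.
Proof. by move=> e0; apply: ballxx; rewrite ltcR. Qed.
Lemma ball_real_sym x y (e : R) : ball_real x e y -> ball_real y e x.
Proof. exact: ball_sym. Qed.
Lemma ball_real_triangle x y z e1 e2 :
  ball_real x e1 y -> ball_real y e2 z -> ball_real x (e1 + e2) z.
Proof. by move=> xy yz; rewrite /ball_real rmorphD; apply: ball_triangle xy yz. Qed.
Lemma ball_real_entourage : (@entourage HR) = entourage_ ball_real.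
Proof.
rewrite /= -(@entourage_ballE _ H) /entourage_ /ball_real.
apply/funext => A; apply/propext; split.
  move=> [e e0 sA]; exists (complex.Re e); last by rewrite -ge0_complexE ?ltW.
  by have := e0; rewrite /= {1}(ge0_complexE (ltW e0)) ltcR.
by move=> [e e0 sA]; exists ((e%:C)%C) => //=; rewrite ltcR.
Qed.

HB.instance Definition _ := Uniform_isPseudoMetric.Build R HR
  ball_real_center ball_real_sym ball_real_triangle ball_real_entourage.

Definition norm_real (x : H) : R := complex.Re `|x|.

Lemma norm_realE (x : H) : `|x| = ((norm_real x)%:C)%C.
Proof. exact: ge0_complexE. Qed.

Lemma norm_realD (x y : HR) : norm_real (x + y) <= norm_real x + norm_real y.
Proof. by have := ler_normD (x : H) y; rewrite !norm_realE -rmorphD lecR. Qed.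
Lemma norm_real_eq0 (x : HR) : norm_real x = 0 -> x = 0.
Proof. by move=> x0; apply/(@normr0_eq0 _ H); rewrite norm_realE x0. Qed.
Lemma norm_realMn (x : HR) n : norm_real (x *+ n) = norm_real x *+ n.
Proof. by rewrite /norm_real (@normrMn _ H) raddfMn. Qed.
Lemma norm_realN (x : HR) : norm_real (- x) = norm_real x.
Proof. by rewrite /norm_real (@normrN _ H). Qed.

HB.instance Definition _ := Num.Zmodule_isNormed.Build R HR
  norm_realD norm_real_eq0 norm_realMn norm_realN.

Lemma ball_real_norm : (@ball R HR) = ball_ (fun x : HR => `|x|).
Proof.
apply/funext => x; apply/funext => e; apply/funext => y.
rewrite /ball /= /ball_real -(@ball_normE _ H) /ball_ /=.
by rewrite norm_realE ltcR.
Qed.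

HB.instance Definition _ := NormedZmod_PseudoMetric_eq.Build R HR ball_real_norm.

Lemma norm_realZ (r : R) (x : HR) : `|r *: x| = `|r| * `|x|.
Proof.
change (norm_real (((r%:C)%C : Cplx R) *: (x : H)) = `|r| * norm_real x).
by rewrite /norm_real (@normrZ _ H) norm_real_complex norm_realE -rmorphM.
Qed.

HB.instance Definition _ :=
  PseudoMetricNormedZmod_Lmodule_isNormedModule.Build R HR norm_realZ.

End Realification.

Section LinearFunction.
Context {K : pzRingType} {E F : lmodType K} {f : E -> F}.
Hypothesis f_lin : linear f.

Let f_linear : {linear E -> F} := HB.pack f (GRing.isLinear.Build _ _ _ _ f f_lin).

Lemma linear_fun0 : f 0 = 0. Proof. exact: (linear0 f_linear). Qed.
Lemma linear_funD x y : f (x + y) = f x + f y. Proof. exact: (linearD f_linear). Qed.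
Lemma linear_funB x y : f (x - y) = f x - f y. Proof. exact: (linearB f_linear). Qed.
Lemma linear_funZ a x : f (a *: x) = a *: f x. Proof. exact: (linearZ_LR f_linear). Qed.

End LinearFunction.

Lemma cvg_at_right0_seq {R : realType} (u : R ^nat) :
  (forall n, 0 < u n) -> u @ \oo --> 0 -> u @ \oo --> 0^'+.
Proof.
by move=> u_gt0 u0 P /u0[N _ uN]; exists N => // n /uN; apply; exact: u_gt0.
Qed.

Lemma exists_div_succ_lt {R : realType} (t d : R) :
  0 < d -> exists n : nat, t / n.+1%:R < d.
Proof.
move=> d0; exists (Num.truncn (t / d)).
by rewrite ltr_pdivrMr ?ltr0n // mulrC -ltr_pdivrMr // truncnS_gt.
Qed.

Section RealSemigroup.
Variables (R : realType) (E : completeNormedModType R) (W : R -> E -> E).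
Hypotheses (W_lin : forall t, 0 <= t -> linear (W t))
  (W_cont : forall t, 0 <= t -> continuous (W t))
  (W0 : forall x, W 0 x = x)
  (W_sg : forall s t, 0 <= s -> 0 <= t -> forall x, W (s + t) x = W s (W t x))
  (W_strong : forall x, W^~ x @ 0^'+ --> x).

Lemma semigroup_bounded_along_null_seq (h : R ^nat) :
  (forall n, 0 < h n) -> h @ \oo --> 0 ->
  exists M, forall n x, `|x| <= 1 -> `|W (h n) x| <= M.
Proof.
move=> h_gt0 h0; have /(_ 1)[M WM] : uniform_bounded (range (fun n => W (h n))).
  apply: Banach_Steinhauss => [_ [n _ <-]|x].
    have Wlin := W_lin _ (ltW (h_gt0 n)).
    pose Wn : {linear E -> E} := HB.pack (W (h n)) (GRing.isLinear.Build _ _ _ _ _ Wlin).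
    split => //; exact/(bounded_funP Wn)/(linear_bounded_continuous Wn)/W_cont/ltW.
  have /cvg_seq_bounded/pinfty_ex_gt0[M _ WM] : cvgn (fun n => W (h n) x).
    by apply/cvg_ex; exists x; apply: cvg_comp (cvg_at_right0_seq _ h_gt0 h0) (W_strong x).
  by exists M => _ [n _ <-]; apply: WM.
by exists M => n x x1; apply: WM x1; exists n.
Qed.

Lemma semigroup_locally_bounded : exists2 d : R, 0 < d &
  exists M : R, forall h, 0 < h < d -> forall x, `|x| <= 1 -> `|W h x| <= M.
Proof.
(* Otherwise there are h_n <= 1/(n+1) and |x_n| <= 1 with |W h_n x_n| > n. *)
apply: contrapT => unbounded.
have witness n : exists hx : R * E,
    [/\ 0 < hx.1 <= harmonic n, `|hx.2| <= 1 & n%:R < `|W hx.1 hx.2|].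
  apply: contrapT => nwit; apply: unbounded.
  exists (harmonic n); first exact: harmonic_gt0.
  exists n%:R => h /andP[h0 hn] x x1; rewrite leNgt; apply/negP => Mlt.
  by apply: nwit; exists (h, x); split; rewrite //= h0 ltW.
have [g gP] := choice witness.
have g_gt0 n : 0 < (g n).1 by have [/andP[]] := gP n.
have g0 : (fun n => (g n).1) @ \oo --> 0.
  apply: (@squeeze_cvgr _ _ _ _ (cst 0) harmonic); last exact: cvg_harmonic.
    by near=> n; have [/andP[/ltW -> ->]] := gP n.
  exact: cvg_cst.
have [M WM] := semigroup_bounded_along_null_seq _ g_gt0 g0.
have [_ x1 Mlt] := gP (Num.truncn M).+1.
have := lt_le_trans (lt_trans (truncnS_gt M) Mlt) (WM _ _ x1).
by rewrite ltxx.
Unshelve. all: by end_near.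
Qed.

Lemma semigroup_locally_opnorm_bounded : exists2 d : R, 0 < d &
  exists2 M : R, 0 <= M & forall h, 0 <= h < d -> forall x, `|W h x| <= M * `|x|.
Proof.
have [d d0 [M WM]] := semigroup_locally_bounded.
exists d => //; exists (Num.max M 1) => [|h /andP[h0 hd] x].
  by rewrite le_max ler01 orbT.
have [->|x0] := eqVneq x 0; first by rewrite (linear_fun0 (W_lin _ h0)) normr0 mulr0.
have [->|hn0] := eqVneq h 0; first by rewrite W0 ler_peMl // le_max lexx orbT.
have nx0 : 0 < `|x| by rewrite normr_gt0.
set y := `|x|^-1 *: x.
have y1 : `|y| <= 1 by rewrite normrZ ger0_norm ?invr_ge0 // mulVf ?gt_eqF.
have xy : x = `|x| *: y by rewrite scalerA mulfV ?scale1r ?gt_eqF.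
rewrite {1}xy (linear_funZ (W_lin _ h0)) normrZ ger0_norm // mulrC ler_pM2r //.
apply: le_trans (WM h _ y y1) _; first by rewrite lt_def hn0 h0.
by rewrite le_max lexx.
Qed.

Lemma semigroup_fixed_natmul z s :
  0 <= s -> W s z = z -> forall n : nat, W (n%:R * s) z = z.
Proof.
move=> s0 Wz; elim=> [|n IH]; first by rewrite mul0r W0.
by rewrite -natr1 mulrDl mul1r W_sg ?mulr_ge0 // Wz IH.
Qed.

Section LocalBound.
Context {d M : R}.
Hypothesis W_bound : forall h, 0 <= h < d -> forall x, `|W h x| <= M * `|x|.

Lemma semigroup_natmul_sub_le z s (n : nat) : 0 <= s -> n%:R * s < d ->
  `|W (n%:R * s) z - z| <= n%:R * M * `|W s z - z|.
Proof.
move=> s0; elim: n => [|n IH] nsd; first by rewrite !mul0r W0 subrr normr0.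
have ns0 : 0 <= n%:R * s by rewrite mulr_ge0.
have nsd' : n%:R * s < d.
  by apply: le_lt_trans nsd; rewrite ler_wpM2r // ler_nat.
have -> : W (n.+1%:R * s) z - z = W (n%:R * s) (W s z - z) + (W (n%:R * s) z - z).
  by rewrite -natr1 mulrDl mul1r W_sg // (linear_funB (W_lin _ ns0)) addrA subrK.
rewrite -natr1 !mulrDl mul1r addrC (le_trans (ler_normD _ _)) // lerD ?IH //.
by apply: W_bound; rewrite ns0 nsd'.
Qed.

End LocalBound.

Lemma semigroup_generator0_fixed z :
  (fun h => h^-1 *: (W h z - z)) @ 0^'+ --> 0 -> forall t, 0 <= t -> W t z = z.
Proof.
move=> /cvgrPdist_lt gen0.
have [d d0 [M M0 W_bound]] := semigroup_locally_opnorm_bounded.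
have small t : 0 <= t < d -> W t z = z.
  move=> /andP[t0 td]; have [->|tn0] := eqVneq t 0; first exact: W0.
  have {t0 tn0}t0 : 0 < t by rewrite lt_def tn0 t0.
  apply/eqP; rewrite -subr_eq0 -normr_le0; apply/ler_addgt0Pr => e e0.
  have step : (fun n => t / n.+1%:R) @ \oo --> 0^'+.
    apply: cvg_at_right0_seq => [n|]; first by rewrite divr_gt0 ?ltr0n.
    by rewrite -(mulr0 t); apply: cvgMr; exact: cvg_harmonic.
  have tM1 : 0 < t * M + 1 := ltr_wpDl (mulr_ge0 (ltW t0) M0) ltr01.
  (* Cut t into N+1 steps s so short that |W s z - z| <= s e / (t M + 1). *)
  have [N _ hN] := step _ (gen0 _ (divr_gt0 e0 tM1)).
  have := hN N (leqnn N); rewrite /= sub0r normrN.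
  set s := t / N.+1%:R; have ts : N.+1%:R * s = t by rewrite mulrC divfK // pnatr_eq0.
  have s0 : 0 < s by rewrite divr_gt0 ?ltr0n.
  rewrite normrZ ger0_norm ?invr_ge0 ?(ltW s0) // ltr_pdivrMl // => Ws.
  have := semigroup_natmul_sub_le W_bound z s N.+1 (ltW s0); rewrite ts => /(_ td).
  rewrite add0r => /le_trans; apply.
  apply: le_trans (ler_wpM2l _ (ltW Ws)) _; first by rewrite mulr_ge0.
  have -> : N.+1%:R * M * (s * (e / (t * M + 1))) = t * M / (t * M + 1) * e.
    by rewrite -ts; ring.
  by rewrite ler_piMl ?(ltW e0) // ler_pdivrMr // mul1r lerDl.
move=> t t0; have [n tnd] := exists_div_succ_lt t d d0.
rewrite -[t](@divfK _ n.+1%:R) ?pnatr_eq0 // mulrC.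
by apply: semigroup_fixed_natmul; rewrite ?divr_ge0 // small // tnd divr_ge0.
Qed.

End RealSemigroup.

Section ProjComplSemigroup.
Variables (R : realType) (H : normedModType (Cplx R)) (P : H -> H) (V : R -> H -> H).
Hypotheses (P_lin : linear P) (P_cont : continuous P) (PK : forall x, P (P x) = P x)
  (V_C0 : C0_semigroup V) (V_fixP : forall t x, 0 <= t -> V t (P x) = P x).

Lemma C0_semigroup_proj_compl : C0_semigroup (fun t x => P x + (V t x - P (V t x))).
Proof.
have [V_lin V_cont V0 V_sg V_sc] := V_C0.
have PD := linear_funD P_lin; have PB := linear_funB P_lin; have PZ := linear_funZ P_lin.
have Q_cont : continuous (fun x => x - P x).
  by move=> x; apply: cvgB; [exact: cvg_id | exact: P_cont].
split.
- move=> t t0 a x y; rewrite (V_lin t t0) !PD !PZ scalerDr scalerBr.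
  by rewrite opprD (addrACA (a *: V t x)) (addrACA (a *: P x)).
- move=> t t0 x; apply: cvgD; first exact: P_cont.
  exact: continuous_comp (V_cont t t0 x) (Q_cont _).
- by move=> x; rewrite V0 addrC subrK.
- move=> s t s0 t0 x; rewrite V_sg //; set y := V t x; congr (_ + _).
    by rewrite PD PB !PK subrr addr0.
  rewrite (linear_funD (V_lin s s0)) (linear_funB (V_lin s s0)) !V_fixP //.
  by rewrite PD PB !PK opprD addrACA subrr add0r opprB addrA subrK.
- move=> x; rewrite -[X in _ --> X](subrK (P x)) [X in _ --> X]addrC.
  by apply: cvgD; [exact: cvg_cst | exact: continuous_cvg (Q_cont x) (V_sc x)].
Qed.
End ProjComplSemigroup.

Section InnerProduct.
Context {R : realType} {H : normedModType (Cplx R)} {ip : H -> H -> Cplx R}.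
Hypothesis ip_inner : is_inner_product ip.

Lemma ipDZl a x y w : ip (a *: x + y) w = a * ip x w + ip y w.
Proof. by case: ip_inner. Qed.

Lemma ip_conj x y : ip x y = Num.conj (ip y x).
Proof. by case: ip_inner. Qed.

Lemma ip_eq0 x : ip x x = 0 -> x = 0.
Proof. by case: ip_inner => _ _ _ /(_ x). Qed.

Lemma normr_sqr_ip x : `|x| ^+ 2 = ip x x.
Proof. by case: ip_inner. Qed.

Lemma ipDl x y w : ip (x + y) w = ip x w + ip y w.
Proof. by rewrite -[x]scale1r ipDZl mul1r scale1r. Qed.

Lemma ipZl a x w : ip (a *: x) w = a * ip x w.
Proof.
have ip0 : ip 0 w = 0 by apply: (@addrI _ (ip 0 w)); rewrite -ipDl !addr0.
by rewrite -[a *: x]addr0 ipDZl ip0 addr0.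
Qed.

Lemma ipDr x y w : ip w (x + y) = ip w x + ip w y.
Proof. by rewrite ip_conj ipDl rmorphD (ip_conj w x) (ip_conj w y). Qed.

Lemma ipZr a x w : ip w (a *: x) = Num.conj a * ip w x.
Proof. by rewrite ip_conj ipZl rmorphM (ip_conj w x). Qed.

Lemma ip_polarization x z : ip x z = 4%:R^-1 *
  (`|x + z| ^+ 2 - `|x - z| ^+ 2 + 'i * `|x + 'i *: z| ^+ 2 - 'i * `|x - 'i *: z| ^+ 2).
Proof.
have expand c : `|x + c *: z| ^+ 2 =
    ip x x + Num.conj c * ip x z + c * ip z x + c * Num.conj c * ip z z.
  by rewrite normr_sqr_ip ipDl !ipDr !ipZl !ipZr; ring.
have -> : x - z = x + (-1) *: z by rewrite scaleN1r.
have -> : x - 'i *: z = x + (- 'i) *: z by rewrite scaleNr.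
have conjNi : Num.conj (- 'i) = 'i :> Cplx R by rewrite -conjCi conjCK.
rewrite -[X in x + X]scale1r !expand rmorph1 rmorphN1 conjNi conjCi.
have ii : 'i * 'i = -1 :> Cplx R by rewrite -expr2 sqrCi.
apply: (@mulfI _ 4%:R); first by rewrite pnatr_eq0.
by rewrite mulrA mulfV ?pnatr_eq0 // mul1r; ring: ii.
Qed.

Lemma continuous_ip_l z : continuous (fun x => ip x z : (Cplx R)^o).
Proof.
have sqr_norm w : continuous (fun x => `|x + w| ^+ 2 : (Cplx R)^o).
  rewrite (_ : (fun x => _) = fun x => `|x + w| * `|x + w|).
    move=> x; apply: cvgM; apply: cvg_norm;
    by apply: cvgD; [exact: cvg_id | exact: cvg_cst].
  by apply/funext => x; rewrite expr2.
rewrite (funext (ip_polarization^~ z)) => x.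
by apply: cvgMr; apply: cvgB; [apply: cvgD; [apply: cvgB | apply: cvgMr] | apply: cvgMr];
  exact: sqr_norm.
Qed.

End InnerProduct.

Section Projection.
Variables (R : realType) (H : normedModType (Cplx R)) (ip : H -> H -> Cplx R) (z : H).
Hypotheses (ip_inner : is_inner_product ip) (z_neq0 : z != 0).

Lemma projP_linear : linear (projP ip z).
Proof.
by move=> a x y; rewrite /projP (ipDZl ip_inner) mulrDl scalerDl -mulrA scalerA.
Qed.

Lemma projP_continuous : continuous (projP ip z).
Proof. by move=> x; apply: cvgZr_tmp; apply: cvgMl; exact: (continuous_ip_l ip_inner). Qed.

Lemma projP_id : projP ip z z = z.
Proof.
have ipzz : ip z z != 0 by apply: contra z_neq0 => /eqP/(ip_eq0 ip_inner)/eqP.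
by rewrite /projP mulfV // scale1r.
Qed.

Lemma projPK x : projP ip z (projP ip z x) = projP ip z x.
Proof. by rewrite {2}/projP (linear_funZ projP_linear) projP_id. Qed.

End Projection.

Lemma C0_semigroup_generator0_fixed (R : realType) (H : completeNormedModType (Cplx R))
    (V : R -> H -> H) (z : H) :
  C0_semigroup V -> is_generator V z 0 -> forall t, 0 <= t -> V t z = z.
Proof.
case=> V_lin V_cont V0 V_sg V_sc gen0.
apply: (@semigroup_generator0_fixed R (realification H) V) => //.
- by move=> t t0 a; exact: V_lin t t0 (a%:C)%C.
- rewrite (_ : (fun h => _) = diff_quot V z) //.
  by apply/funext => h; rewrite /diff_quot -fmorphV.
Qed.

Lemma C0_semigroup_generator0 (R : realType) (H : normedModType (Cplx R))
    (U : R -> H -> H) :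
  C0_semigroup U -> is_generator U 0 0.
Proof.
case=> U_lin _ _ _ _; apply: cvg_near_cst; near=> h.
by rewrite /diff_quot (linear_fun0 (U_lin h _)) ?subrr ?scaler0.
Unshelve. all: by end_near.
Qed.

Theorem lemma1 (R : realType) (H : completeNormedModType (Cplx R))
  (ip : H -> H -> Cplx R) (U : R -> H -> H) (z : H) (V : R -> H -> H) :
  is_inner_product ip ->
  C0_semigroup U ->
  (exists Lz : H, is_generator U z Lz) ->
  z != 0 ->
  C0_semigroup V ->
  (forall x y : H, is_generator V x y <-> is_generator U (projQ ip z x) y) ->
  C0_semigroup (fun t x => projP ip z x + projQ ip z (V t x)).
Proof.
move=> ip_inner U_C0 _ z_neq0 V_C0 genV.
have Vz : forall t, 0 <= t -> V t z = z.
  apply: C0_semigroup_generator0_fixed => //; apply/genV.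
  by rewrite /projQ projP_id // subrr; exact: C0_semigroup_generator0 U_C0.
apply: C0_semigroup_proj_compl => //.
- exact: projP_linear.
- exact: projP_continuous.
- exact: projPK.
- move=> t x t0; have [V_lin _ _ _ _] := V_C0.
  by rewrite {1}/projP (linear_funZ (V_lin t t0)) Vz.
Qed.
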